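(* Let $\mathbf{C}$ be a category of $\mathbf{FI}$ type. The set of character polynomials on $\mathbf{C}$ is closed under pointwise products (so forms an algebra), and if $P,Q$ are character polynomials of respective degrees $\leq c_1$ and $\leq c_2$, then $P\cdot Q$ is a character polynomial of degree $\leq c_1+c_2$.
   Context: A category $\mathbf{C}$ is of $\mathbf{FI}$ type if: (1) all Hom-sets are finite; (2) every morphism is a monomorphism and every endomorphism is an isomorphism; (3) for all objects $c,d$ the group $G_d=\mathrm{Aut}_{\mathbf{C}}(d)$ acts transitively on $\mathrm{Hom}_{\mathbf{C}}(c,d)$; (4) for every $d$ only finitely many isomorphism classes of $c$ have $\mathrm{Hom}(c,d)\neq\emptyset$; (5) every pair $c_1\to d\leftarrow c_2$ has a pullback, and every pair $f_i:p\to c_i$ has a weak push-out, i.e. a commutative pullback square $g_i:c_i\to d$ such that for every other pullback square $h_i:c_i\to z$ with $h_1f_1=h_2f_2$ there is a unique $h:d\to z$ with $hg_i=h_i$. Write $c\leq d$ if $\mathrm{Hom}(c,d)\neq\emptyset$. Binomial set: $\binom{d}{c}=\mathrm{Hom}(c,d)/G_c$. For a conjugacy class $\mu\subseteq G_c$ (write $|\mu|=c$), $\binom{X}{\mu}$ is the class function on every $G_d$ given by $\sigma\mapsto\#\{[f]\in\binom{d}{c}:\exists\psi\in\mu,\ \sigma f=f\psi\}$. A character polynomial is a $\mathbb{C}$-linear combination of such functions; it has degree $\leq d$ if every $\binom{X}{\mu}$ appearing nontrivially has $|\mu|\leq d$. Write $d\geq c_1+c_2$ if $w\leq d$ for every weak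 push-out object $w$ of any pair $p\to c_1$, $p\to c_2$; degree $\leq c_1+c_2$ means degree $\leq d$ for every $d\geq c_1+c_2$. *)

From HB Require Import structures.
From mathcomp Require Import all_boot all_order all_algebra.
From mathcomp Require Import complex.
From mathcomp Require Import Rstruct.
Set Implicit Arguments.
Unset Strict Implicit.
Unset Printing Implicit Defensive.
Import Order.TTheory GRing.Theory Num.Theory.

Definition CC : Type := complex Rdefinitions.R.

Record Cat := {
  ob : Type;
  hom : ob -> ob -> finType;
  idm : forall c, hom c c;
  comp : forall a b c, hom b c -> hom a b -> hom a c;
  comp_assoc : forall a b c d (h : hom c d) (g : hom b c) (f : hom a b),
      comp h (comp g f) = comp (comp h g) f;
  comp_id_l : forall a b (f : hom a b), comp (idm b) f = f;
  comp_id_r : forall a b (f : hom a b), comp f (idm a) = f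
}.
Arguments idm {_} _.
Arguments comp {_ _ _ _} _ _.

Section FI.
Variable C : Cat.

Definition isob {a b : ob C} (f : hom a b) : bool :=
  [exists g : hom b a, (comp g f == idm a) && (comp f g == idm b)].

Definition mono {c d : ob C} (f : hom c d) : Prop :=
  forall a (x y : hom a c), comp f x = comp f y -> x = y.

Definition ob_le (c d : ob C) : Prop := inhabited (hom c d).

Definition ob_iso (c d : ob C) : Prop := exists f : hom c d, isob f.

Definition is_pullback {p c1 c2 d : ob C}
  (f1 : hom p c1) (f2 : hom p c2) (g1 : hom c1 d) (g2 : hom c2 d) : Prop :=
  comp g1 f1 = comp g2 f2 /\
  forall q (h1 : hom q c1) (h2 : hom q c2), comp g1 h1 = comp g2 h2 ->
    exists h : hom q p, [/\ comp f1 h = h1, comp f2 h = h2 &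
      forall h' : hom q p, comp f1 h' = h1 -> comp f2 h' = h2 -> h' = h].

Definition is_weak_pushout {p c1 c2 d : ob C}
  (f1 : hom p c1) (f2 : hom p c2) (g1 : hom c1 d) (g2 : hom c2 d) : Prop :=
  is_pullback f1 f2 g1 g2 /\
  forall z (h1 : hom c1 z) (h2 : hom c2 z), is_pullback f1 f2 h1 h2 ->
    exists h : hom d z, [/\ comp h g1 = h1, comp h g2 = h2 &
      forall h' : hom d z, comp h' g1 = h1 -> comp h' g2 = h2 -> h' = h].

Definition FI_type : Prop :=
  (* (1) finite Hom-sets: built into [Cat] (hom is a finType) *)
  (forall c d (f : hom c d), mono f) /\
  (forall d (f : hom d d), isob f) /\
  (forall c d (f g : hom c d), exists s : hom d d, isob s /\ g = comp s f) /\
  (forall d, exists n (e : 'I_n -> ob C),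
      forall c, ob_le c d -> exists i, ob_iso c (e i)) /\
  (forall c1 c2 d (g1 : hom c1 d) (g2 : hom c2 d),
      exists p (f1 : hom p c1) (f2 : hom p c2), is_pullback f1 f2 g1 g2) /\
  (forall p c1 c2 (f1 : hom p c1) (f2 : hom p c2),
      exists d (g1 : hom c1 d) (g2 : hom c2 d), is_weak_pushout f1 f2 g1 g2).

Definition in_class {c : ob C} (psi0 psi : hom c c) : bool :=
  [exists g : hom c c, isob g && (comp psi g == comp g psi0)].

Definition orbit {c d : ob C} (f : hom c d) : {set hom c d} :=
  [set comp f g | g in [pred g : hom c c | isob g]].

(* binom(X, mu)(sigma) for mu the conjugacy class of psi0 in G_c and
   sigma in G_d: number of [f] in Hom(c,d)/G_c with sigma f = f psi,
   for some psi in mu. *)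
Definition binomX {c : ob C} (psi0 : hom c c) (d : ob C) (sigma : hom d d)
  : nat :=
  #|[set orbit f | f in [pred f : hom c d |
       [exists psi : hom c c, in_class psi0 psi && (comp sigma f == comp f psi)]]]|.

(* A family of functions on the groups G_d (values off G_d are irrelevant). *)
Definition cfam := forall d : ob C, hom d d -> CC.

Definition char_poly_with (ok : ob C -> Prop) (P : cfam) : Prop :=
  exists n (a : 'I_n -> CC) (cs : 'I_n -> ob C) (psi : forall i, hom (cs i) (cs i)),
    [/\ forall i, isob (psi i),
        forall i, (a i != 0)%R -> ok (cs i) &
        forall d (sigma : hom d d), isob sigma ->
          P d sigma = (\sum_(i < n) a i * (binomX (psi i) sigma)%:R)%R].

Definition is_char_poly (P : cfam) : Prop := char_poly_with (fun _ => True) P.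

Definition deg_le (P : cfam) (d : ob C) : Prop :=
  char_poly_with (fun c => ob_le c d) P.

Definition ob_ge_sum (d c1 c2 : ob C) : Prop :=
  forall p (f1 : hom p c1) (f2 : hom p c2) w (g1 : hom c1 w) (g2 : hom c2 w),
    is_weak_pushout f1 f2 g1 g2 -> ob_le w d.

Definition deg_le_sum (P : cfam) (c1 c2 : ob C) : Prop :=
  forall d, ob_ge_sum d c1 c2 -> deg_le P d.

Definition cfam_mul (P Q : cfam) : cfam := fun d sigma => (P d sigma * Q d sigma)%R.

End FI.

From Pilot Require Import Defs.
From HB Require Import structures.
From mathcomp Require Import all_boot all_order all_algebra.
From mathcomp Require Import complex Rstruct boolp.
Set Implicit Arguments.
Unset Strict Implicit.
Unset Printing Implicit Defensive.
Import GRing.Theory Num.Theory.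

(* Up to the nonzero factor |mu| / |G_c|, binom(X, mu)(sigma) counts the morphisms
   f : c -> d with sigma f = f psi for a fixed psi in mu.  A product of two such
   counts counts pairs (f1, f2); every pair completes a pullback square over some
   span c1 <- p -> c2, and, p ranging over finitely many representatives, there are
   finitely many spans.  Spreading each pair with total weight 1 over its
   spans, the pairs over a fixed span s are the composites (h g1, h g2) with the
   weak push-out g_i : c_i -> w of s, and sigma h = h tau for a unique tau in G_w
   lifting (psi1, psi2).  The product is thus a linear combination of fixed-point
   counts on the push-out objects w, which lie below every d >= c1 + c2. *)

Lemma sum_card_functional (A B : finType) (R : A -> B -> bool) :
  (forall a a' b, R a b -> R a' b -> a = a') ->
  (\sum_a #|[set b | R a b]| = #|[set b | [exists a, R a b]]|)%N.
Proof.
move=> R_fun; transitivity (\sum_a \sum_(b | R a b) 1)%N.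
  by apply: eq_bigr => a _; rewrite -sum1_card; apply: eq_bigl => b; rewrite inE.
rewrite (exchange_big_dep predT) //= -sum1_card [RHS]big_mkcond /=.
apply: eq_bigr => b _; rewrite inE.
case: existsP => [[a Rab]|noR]; last first.
  by rewrite big_pred0 // => a; apply/negP => Rab; apply: noR; exists a.
rewrite (big_pred1 a) // => a' /=.
by apply/idP/eqP => [Ra'b|->]; first exact: R_fun Ra'b Rab.
Qed.

Section Category.
Variable C : Cat.
Local Notation ob := (@Defs.ob C).
Local Notation hom := (@Defs.hom C).
Local Notation comp := (@Defs.comp C _ _ _).

Lemma isobP (a b : ob) (f : hom a b) :
  isob f -> exists g : hom b a, comp g f = idm a /\ comp f g = idm b.
Proof. by case/existsP=> g /andP[/eqP gf /eqP fg]; exists g. Qed.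

Lemma isob_idm (a : ob) : isob (idm a).
Proof. by apply/existsP; exists (idm a); rewrite comp_id_l eqxx. Qed.

Section Pullbacks.
Hypothesis homs_mono : forall (c d : ob) (f : hom c d), mono f.

Lemma is_pullbackI (p c1 c2 d : ob) (q1 : hom p c1) (q2 : hom p c2)
    (k1 : hom c1 d) (k2 : hom c2 d) :
  comp k1 q1 = comp k2 q2 ->
  (forall q (h1 : hom q c1) (h2 : hom q c2), comp k1 h1 = comp k2 h2 ->
     exists h : hom q p, comp q1 h = h1 /\ comp q2 h = h2) ->
  is_pullback q1 q2 k1 k2.
Proof.
move=> sq fact; split=> // q h1 h2 /fact[h [qh1 qh2]].
exists h; split=> // h' qh1' _; apply: (homs_mono (f := q1)).
by rewrite qh1 qh1'.
Qed.

Lemma is_pullback_postcomp (p c1 c2 d d' : ob) (q1 : hom p c1) (q2 : hom p c2)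
    (k1 : hom c1 d) (k2 : hom c2 d) (m : hom d d') :
  is_pullback q1 q2 k1 k2 <-> is_pullback q1 q2 (comp m k1) (comp m k2).
Proof.
split=> -[sq fact]; split.
- by rewrite -!comp_assoc sq.
- by move=> q h1 h2; rewrite -!comp_assoc => /homs_mono; apply: fact.
- by apply: (homs_mono (f := m)); rewrite !comp_assoc.
- by move=> q h1 h2 k12; apply: fact; rewrite -!comp_assoc k12.
Qed.

Lemma is_pullback_precomp_split (p p' c1 c2 d : ob) (q1 : hom p c1) (q2 : hom p c2)
    (k1 : hom c1 d) (k2 : hom c2 d) (j : hom p' p) (j' : hom p p') :
  comp j j' = idm p ->
  is_pullback q1 q2 k1 k2 -> is_pullback (comp q1 j) (comp q2 j) k1 k2.
Proof.
move=> jj' [sq fact]; apply: is_pullbackI; first by rewrite !comp_assoc sq.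
move=> q h1 h2 /fact[h [qh1 qh2 _]]; exists (comp j' h).
by rewrite !comp_assoc -(comp_assoc q1) -(comp_assoc q2) jj' !comp_id_r.
Qed.

Lemma weak_pushout_hom_eq (p c1 c2 w z : ob) (f1 : hom p c1) (f2 : hom p c2)
    (g1 : hom c1 w) (g2 : hom c2 w) (h h' : hom w z) :
  is_weak_pushout f1 f2 g1 g2 ->
  comp h g1 = comp h' g1 -> comp h g2 = comp h' g2 -> h = h'.
Proof.
case=> pb univ hh1 hh2.
have [u [_ _ u_uniq]] := univ _ _ _ ((is_pullback_postcomp _ _ _ _ h).1 pb).
by rewrite (u_uniq h) // (u_uniq h') -?hh1 -?hh2.
Qed.

End Pullbacks.

Section Counting.
Hypothesis homs_mono : forall (c d : ob) (f : hom c d), mono f.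
Hypothesis endos_iso : forall (d : ob) (f : hom d d), isob f.
Local Notation orbit := (@Defs.orbit C _ _).

Definition fix_homs (c d : ob) (psi : hom c c) (sigma : hom d d) : {set hom c d} :=
  [set f | comp sigma f == comp f psi].

Lemma comp_endo_inj (a b : ob) (g : hom a a) : injective (fun f : hom a b => comp f g).
Proof.
have [g' [_ gg']] := isobP (endos_iso g) => f f' /(congr1 (comp^~ g')).
by rewrite -!comp_assoc gg' !comp_id_r.
Qed.

Lemma card_fix_homs_conj (c d : ob) (psi0 psi : hom c c) (sigma : hom d d) :
  in_class psi0 psi -> #|fix_homs psi sigma| = #|fix_homs psi0 sigma|.
Proof.
case/existsP=> g /andP[_ /eqP psig].
have [g' [g'g gg']] := isobP (endos_iso g).
have psi0g' : comp psi0 g' = comp g' psi.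
  have -> : psi0 = comp g' (comp psi g) by rewrite psig comp_assoc g'g comp_id_l.
  by rewrite -!comp_assoc gg' comp_id_r.
rewrite -(card_imset _ (@comp_endo_inj _ d g)); apply: eq_card => f.
apply/imsetP/idP => [[f0 + ->] | ]; rewrite !inE => /eqP sf.
  by apply/eqP; rewrite comp_assoc sf -!comp_assoc psig.
exists (comp f g'); last by rewrite -comp_assoc g'g comp_id_r.
by rewrite inE comp_assoc sf -!comp_assoc psi0g'.
Qed.

Lemma in_class_conj (c : ob) (psi0 psi g g' : hom c c) :
  comp g g' = idm c -> in_class psi0 psi -> in_class psi0 (comp g' (comp psi g)).
Proof.
move=> gg' /existsP[k /andP[_ /eqP psik]]; apply/existsP; exists (comp g' k).
by rewrite endos_iso -!comp_assoc (comp_assoc g) gg' comp_id_l psik eqxx.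
Qed.

Lemma orbitP (c d : ob) (f0 f : hom c d) :
  reflect (exists g : hom c c, f = comp f0 g) (f \in orbit f0).
Proof.
apply: (iffP imsetP) => [[g _ ->]|[g ->]]; first by exists g.
by exists g; rewrite // inE endos_iso.
Qed.

Lemma mem_orbit (c d : ob) (f0 f : hom c d) : (f \in orbit f0) = (orbit f == orbit f0).
Proof.
apply/idP/eqP => [|<-]; last by apply/orbitP; exists (idm c); rewrite comp_id_r.
case/orbitP=> g ->; have [g' [g'g gg']] := isobP (endos_iso g).
apply/setP=> x; apply/orbitP/orbitP => -[h ->].
  by exists (comp g h); rewrite comp_assoc.
by exists (comp g' h); rewrite !comp_assoc -(comp_assoc f0) gg' comp_id_r.
Qed.

Lemma card_orbit (c d : ob) (f : hom c d) : #|orbit f| = #|hom c c|.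
Proof.
rewrite card_in_imset; last by move=> x y _ _; apply: homs_mono.
by apply: eq_card => g; rewrite !inE endos_iso.
Qed.

(* Count X = {f | sigma f = f psi for some psi in mu} by G_c-orbits and by psi. *)
Lemma binomX_mul_card (c d : ob) (psi0 : hom c c) (sigma : hom d d) :
  (binomX psi0 sigma * #|hom c c|)%N =
  (#|[set psi | in_class psi0 psi]| * #|fix_homs psi0 sigma|)%N.
Proof.
pose R psi f := in_class psi0 psi && (comp sigma f == comp f psi).
pose X := [set f | [exists psi, R psi f]].
have X_orbit f0 f : f0 \in X -> f \in orbit f0 -> f \in X.
  rewrite !inE => /existsP[psi /andP[cl_psi /eqP sf0]] /orbitP[g ->].
  have [g' [g'g gg']] := isobP (endos_iso g).
  apply/existsP; exists (comp g' (comp psi g)); rewrite /R in_class_conj //=.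
  by rewrite comp_assoc sf0 -!comp_assoc (comp_assoc g) gg' comp_id_l.
have -> : binomX psi0 sigma = #|orbit @: X|.
  apply: eq_card => O; apply/imsetP/imsetP => -[f f_X ->];
    by exists f; rewrite // /X inE in f_X *.
transitivity #|X|.
  rewrite -sum_nat_const -sum1_card (partition_big_imset orbit).
  apply: eq_bigr => _ /imsetP[f0 f0_X ->]; rewrite -(card_orbit f0) -sum1_card.
  apply: eq_bigl => f; rewrite mem_orbit andb_idl // => /eqP f_f0.
  by apply: X_orbit f0_X _; rewrite mem_orbit f_f0.
rewrite -(sum_card_functional (R := R)); last first.
  by move=> psi psi' f; rewrite /R => /andP[_ /eqP->] /andP[_ /eqP /homs_mono].
rewrite -sum_nat_const [RHS]big_mkcond /=; apply: eq_bigr => psi _; rewrite inE /R.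
have [cl_psi | _] := boolP (in_class psi0 psi); last by apply/eqP; rewrite cards_eq0.
by rewrite -(card_fix_homs_conj _ cl_psi); apply: eq_card => f; rewrite !inE.
Qed.

End Counting.

End Category.

Section CharacterPolynomials.
Variable C : Cat.
Local Notation ob := (@Defs.ob C).
Local Notation hom := (@Defs.hom C).
Local Open Scope ring_scope.

Lemma char_poly_withE (ok : ob -> Prop) (P : cfam C) :
  char_poly_with ok P <->
  exists n (a : 'I_n -> CC) (X : 'I_n -> {c : ob & hom c c}),
    [/\ forall i, isob (projT2 (X i)),
        forall i, a i != 0 -> ok (projT1 (X i)) &
        forall d (sigma : hom d d), isob sigma ->
          P d sigma = \sum_(i < n) a i * (binomX (projT2 (X i)) sigma)%:R].
Proof.
split=> [[n [a [cs [psi [psi_iso a_ok PE]]]]] | [n [a [X [X_iso a_ok PE]]]]].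
  by exists n, a, (fun i => existT _ (cs i) (psi i)).
by exists n, a, (fun i => projT1 (X i)), (fun i => projT2 (X i)).
Qed.

Lemma char_poly_with_ext (ok : ob -> Prop) (P Q : cfam C) :
  (forall d (sigma : hom d d), isob sigma -> Q d sigma = P d sigma) ->
  char_poly_with ok P -> char_poly_with ok Q.
Proof.
move=> QP [n [a [cs [psi [psi_iso a_ok PE]]]]]; exists n, a, cs, psi.
by split=> // d sigma sigma_iso; rewrite QP // PE.
Qed.

Lemma char_poly_with0 (ok : ob -> Prop) : char_poly_with ok (fun _ _ => 0).
Proof.
have no_term : 'I_0 -> {c : ob & hom c c} by case.
apply/char_poly_withE; exists 0%N, (fun _ => 0), no_term.
by split=> [[]|[]|d sigma _]; rewrite ?big_ord0.
Qed.

Lemma char_poly_withD (ok : ob -> Prop) (P Q : cfam C) :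
  char_poly_with ok P -> char_poly_with ok Q ->
  char_poly_with ok (fun d sigma => P d sigma + Q d sigma).
Proof.
move=> /char_poly_withE[n [a [X [X_iso a_ok PE]]]].
move=> /char_poly_withE[m [b [Y [Y_iso b_ok QE]]]].
apply/char_poly_withE.
exists (n + m)%N, (fun i => match split i with inl j => a j | inr j => b j end),
  (fun i => match split i with inl j => X j | inr j => Y j end).
split=> [i|i|d sigma sigma_iso]; first by case: split.
  by case: split => j; [apply: a_ok | apply: b_ok].
rewrite PE // QE // big_split_ord /=.
by congr (_ + _); apply: eq_bigr => i _; rewrite ?(unsplitK (inl _)) ?(unsplitK (inr _)).
Qed.

Lemma char_poly_withZ (ok ok' : ob -> Prop) (k : CC) (P : cfam C) :
  (k != 0 -> forall c, ok' c -> ok c) ->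
  char_poly_with ok' P -> char_poly_with ok (fun d sigma => k * P d sigma).
Proof.
move=> ok'_ok [n [a [cs [psi [psi_iso a_ok PE]]]]].
exists n, (fun i => k * a i), cs, psi; split=> // [i|d sigma sigma_iso].
  by rewrite mulf_eq0 negb_or => /andP[k0 ai0]; apply/ok'_ok/a_ok.
by rewrite PE // mulr_sumr; apply: eq_bigr => i _; rewrite mulrA.
Qed.

Lemma char_poly_with_sum (ok : ob -> Prop) (I : Type) (r : seq I) (A : pred I)
    (F : I -> cfam C) :
  (forall i, A i -> char_poly_with ok (F i)) ->
  char_poly_with ok (fun d sigma => \sum_(i <- r | A i) F i d sigma).
Proof.
move=> F_cp; elim: r => [|i r IHr].
  by apply: char_poly_with_ext (char_poly_with0 ok) => d sigma _; rewrite big_nil.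
have [A_i | A'i] := boolP (A i).
  apply: char_poly_with_ext (char_poly_withD (F_cp i A_i) IHr) => d sigma _.
  by rewrite big_cons A_i.
by apply: char_poly_with_ext IHr => d sigma _; rewrite big_cons (negPf A'i).
Qed.

Lemma char_poly_with_binomX (ok : ob -> Prop) (c : ob) (psi : hom c c) :
  isob psi -> ok c -> char_poly_with ok (fun d sigma => (binomX psi sigma)%:R).
Proof.
move=> psi_iso ok_c; exists 1%N, (fun _ => 1), (fun _ => c), (fun _ => psi).
by split=> // d sigma _; rewrite big_ord1 mul1r.
Qed.

End CharacterPolynomials.

Section FixedPointCounts.
Variable C : Cat.
Local Notation ob := (@Defs.ob C).
Local Notation hom := (@Defs.hom C).
Hypothesis homs_mono : forall (c d : ob) (f : hom c d), mono f.
Hypothesis endos_iso : forall (d : ob) (f : hom d d), isob f.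
Local Open Scope ring_scope.

Lemma in_class_refl (c : ob) (psi : hom c c) : in_class psi psi.
Proof. by apply/existsP; exists (idm c); rewrite isob_idm comp_id_l comp_id_r /=. Qed.

Lemma binomX_fix_homsE (c d : ob) (psi : hom c c) (sigma : hom d d) :
  (binomX psi sigma)%:R =
  #|[set psi' | in_class psi psi']|%:R / #|hom c c|%:R * #|fix_homs psi sigma|%:R :> CC.
Proof.
have Gc_neq0 : #|hom c c|%:R != 0 :> CC.
  by rewrite pnatr_eq0 -lt0n; apply/card_gt0P; exists (idm c).
by rewrite mulrAC -natrM -binomX_mul_card // natrM mulfK.
Qed.

Lemma char_poly_with_fix_homs (ok : ob -> Prop) (c : ob) (psi : hom c c) :
  ok c -> char_poly_with ok (fun d sigma => #|fix_homs psi sigma|%:R).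
Proof.
move=> ok_c; pose k := #|[set psi' | in_class psi psi']|%:R / #|hom c c|%:R : CC.
have k_neq0 : k != 0.
  rewrite mulf_neq0 ?invr_eq0 // pnatr_eq0 -lt0n; apply/card_gt0P.
    by exists psi; rewrite inE in_class_refl.
  by exists (idm c).
apply: char_poly_with_ext
  (char_poly_withZ (k := k^-1) _ (char_poly_with_binomX (endos_iso psi) ok_c)) => //.
by move=> d sigma _; rewrite binomX_fix_homsE // mulKf.
Qed.

End FixedPointCounts.

Section Products.
Variable C : Cat.
Local Notation ob := (@Defs.ob C).
Local Notation hom := (@Defs.hom C).
Local Notation comp := (@Defs.comp C _ _ _).
Hypothesis homs_mono : forall (c d : ob) (f : hom c d), mono f.
Hypothesis endos_iso : forall (d : ob) (f : hom d d), isob f.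
Hypothesis has_pullbacks : forall (c1 c2 d : ob) (g1 : hom c1 d) (g2 : hom c2 d),
  exists p (f1 : hom p c1) (f2 : hom p c2), is_pullback f1 f2 g1 g2.
Hypothesis has_weak_pushouts : forall (p c1 c2 : ob) (f1 : hom p c1) (f2 : hom p c2),
  exists d (g1 : hom c1 d) (g2 : hom c2 d), is_weak_pushout f1 f2 g1 g2.
Hypothesis finite_subobjects : forall d : ob, exists n (e : 'I_n -> ob),
  forall c, ob_le c d -> exists i, ob_iso c (e i).
Local Open Scope ring_scope.

Definition is_weak_pushout_ob (c1 c2 w : ob) : Prop :=
  exists p (f1 : hom p c1) (f2 : hom p c2) (g1 : hom c1 w) (g2 : hom c2 w),
    is_weak_pushout f1 f2 g1 g2.

Section Spans.
Variables (c1 c2 : ob) (n : nat) (e : 'I_n -> ob).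
Hypothesis e_repr : forall c, ob_le c c1 -> exists i, ob_iso c (e i).
Variables (psi1 : hom c1 c1) (psi2 : hom c2 c2).

Definition span := {k : 'I_n & (hom (e k) c1 * hom (e k) c2)%type}.
Definition span_l (s : span) : hom (e (tag s)) c1 := (tagged s).1.
Definition span_r (s : span) : hom (e (tag s)) c2 := (tagged s).2.

Definition pb_spans (d : ob) (f1 : hom c1 d) (f2 : hom c2 d) : {set span} :=
  [set s | `[< is_pullback (span_l s) (span_r s) f1 f2 >]].

Lemma pb_spans_gt0 (d : ob) (f1 : hom c1 d) (f2 : hom c2 d) : (0 < #|pb_spans f1 f2|)%N.
Proof.
have [p [r1 [r2 pb_r]]] := has_pullbacks f1 f2.
have [k [j /isobP[j' [j'j _]]]] := e_repr (inhabits r1).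
apply/card_gt0P; exists (existT _ k (comp r1 j', comp r2 j')); rewrite inE.
by apply/asboolP; apply: is_pullback_precomp_split j'j pb_r.
Qed.

Definition fix_pairs (d : ob) (sigma : hom d d) : {set hom c1 d * hom c2 d} :=
  setX (fix_homs psi1 sigma) (fix_homs psi2 sigma).

Definition span_share (s : span) (d : ob) (sigma : hom d d) : CC :=
  \sum_(f in fix_pairs sigma | s \in pb_spans f.1 f.2) #|pb_spans f.1 f.2|%:R^-1.

Lemma fix_homs_mul (d : ob) (sigma : hom d d) :
  #|fix_homs psi1 sigma|%:R * #|fix_homs psi2 sigma|%:R = \sum_s span_share s sigma.
Proof.
rewrite -natrM -cardsX -sum1_card natr_sum.
rewrite (exchange_big_dep (fun f => f \in fix_pairs sigma)) /=; last by move=> s f _ /andP[].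
apply: eq_bigr => f f_pairs; rewrite f_pairs sumr_const -[RHS]mulr_natr mulVf //.
by rewrite pnatr_eq0 -lt0n pb_spans_gt0.
Qed.

Section SpanPushout.
Variables (s : span) (w : ob) (g1 : hom c1 w) (g2 : hom c2 w).
Hypothesis s_wpo : is_weak_pushout (span_l s) (span_r s) g1 g2.

Definition lifts : {set hom w w} :=
  [set tau | (comp tau g1 == comp g1 psi1) && (comp tau g2 == comp g2 psi2)].

Lemma pb_spans_pushout (d : ob) (h : hom w d) :
  pb_spans (comp h g1) (comp h g2) = pb_spans g1 g2.
Proof.
by apply/setP=> s'; rewrite !inE; apply/asbool_equiv_eq; rewrite -is_pullback_postcomp.
Qed.

Lemma lift_exists (d : ob) (sigma : hom d d) (h : hom w d) :
  comp sigma (comp h g1) = comp (comp h g1) psi1 ->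
  comp sigma (comp h g2) = comp (comp h g2) psi2 ->
  exists2 tau, tau \in lifts & comp sigma h = comp h tau.
Proof.
move=> sh1 sh2; have [pb_s univ_s] := s_wpo.
have pb_sh := (is_pullback_postcomp homs_mono _ _ _ _ (comp sigma h)).1 pb_s.
rewrite -!comp_assoc sh1 sh2 -!comp_assoc in pb_sh.
have pb_psi := (is_pullback_postcomp homs_mono _ _ _ _ h).2 pb_sh.
have [tau [tau1 tau2 _]] := univ_s _ _ _ pb_psi.
exists tau; first by rewrite inE tau1 tau2 !eqxx.
apply: (weak_pushout_hom_eq homs_mono s_wpo).
  by rewrite -!comp_assoc tau1 sh1 comp_assoc.
by rewrite -!comp_assoc tau2 sh2 comp_assoc.
Qed.

Lemma card_span_fix_pairs (d : ob) (sigma : hom d d) :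
  #|[set f in fix_pairs sigma | s \in pb_spans f.1 f.2]| =
  (\sum_(tau in lifts) #|fix_homs tau sigma|)%N.
Proof.
pose R tau (h : hom w d) := (tau \in lifts) && (comp sigma h == comp h tau).
have R_fun tau tau' h : R tau h -> R tau' h -> tau = tau'.
  by rewrite /R => /andP[_ /eqP->] /andP[_ /eqP /homs_mono].
have -> : (\sum_(tau in lifts) #|fix_homs tau sigma|)%N =
          (\sum_tau #|[set h | R tau h]|)%N.
  rewrite big_mkcond; apply: eq_bigr => tau _; rewrite /R.
  case: (tau \in lifts); first by apply: eq_card => h; rewrite !inE.
  by rewrite eq_card0 // => h; rewrite inE.
rewrite (sum_card_functional R_fun).
have fix_pairs_lift h :
    ((comp h g1, comp h g2) \in fix_pairs sigma) = [exists tau, R tau h].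
  apply/idP/existsP => [| [tau /andP[]]]; rewrite !inE /=.
    case/andP=> /eqP sh1 /eqP sh2; have [tau lift_tau sh] := lift_exists sh1 sh2.
    by exists tau; rewrite /R lift_tau sh eqxx.
  case/andP=> /eqP tau1 /eqP tau2 /eqP sh.
  by rewrite !comp_assoc sh -!comp_assoc tau1 tau2 !eqxx.
have factor_inj : {in [set h | [exists tau, R tau h]] &,
    injective (fun h : hom w d => (comp h g1, comp h g2))}.
  by move=> h h' _ _ [] /(weak_pushout_hom_eq homs_mono s_wpo); apply.
rewrite -(card_in_imset factor_inj); apply: eq_card => -[f1 f2]; rewrite inE /=.
apply/andP/imsetP => [[f_pairs] | [h]].
  rewrite inE => /asboolP pb_f; have [h [hf1 hf2 _]] := s_wpo.2 _ _ _ pb_f.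
  exists h; last by rewrite hf1 hf2.
  by rewrite inE -fix_pairs_lift hf1 hf2.
rewrite inE -fix_pairs_lift => h_lift [-> ->]; split=> //.
by rewrite pb_spans_pushout inE; apply/asboolP; case: s_wpo.
Qed.

Lemma span_shareE (d : ob) (sigma : hom d d) :
  span_share s sigma =
  #|pb_spans g1 g2|%:R^-1 * \sum_(tau in lifts) #|fix_homs tau sigma|%:R.
Proof.
rewrite /span_share (eq_bigr (fun _ => #|pb_spans g1 g2|%:R^-1)) => [|[f1 f2] /andP[_]].
  rewrite sumr_const -natr_sum -card_span_fix_pairs mulr_natr.
  by congr (_ *+ _); apply: eq_card => f; rewrite inE.
rewrite inE /= => /asboolP /(s_wpo.2) [h [<- <- _]].
by rewrite pb_spans_pushout.
Qed.

End SpanPushout.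

Lemma char_poly_fix_homs_mul :
  char_poly_with (is_weak_pushout_ob c1 c2)
    (fun d sigma => #|fix_homs psi1 sigma|%:R * #|fix_homs psi2 sigma|%:R).
Proof.
have share_cp s : char_poly_with (is_weak_pushout_ob c1 c2)
    (fun d sigma => span_share s sigma).
  have [w [g1 [g2 s_wpo]]] := has_weak_pushouts (span_l s) (span_r s).
  have w_ok : is_weak_pushout_ob c1 c2 w.
    by exists (e (tag s)), (span_l s), (span_r s), g1, g2.
  apply: char_poly_with_ext (char_poly_withZ (k := #|pb_spans g1 g2|%:R^-1) _
    (char_poly_with_sum (index_enum _) (fun tau _ =>
       char_poly_with_fix_homs homs_mono endos_iso tau w_ok))) => //.
  by move=> d sigma _; rewrite (span_shareE s_wpo).
apply: char_poly_with_ext (char_poly_with_sum (index_enum _) (fun s _ => share_cp s)).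
by move=> d sigma _; apply: fix_homs_mul.
Qed.

End Spans.

Lemma char_poly_binomX_mul (c1 c2 : ob) (psi1 : hom c1 c1) (psi2 : hom c2 c2) :
  char_poly_with (is_weak_pushout_ob c1 c2)
    (fun d sigma => (binomX psi1 sigma)%:R * (binomX psi2 sigma)%:R).
Proof.
have [n [e e_repr]] := finite_subobjects c1.
pose k c (psi : hom c c) := #|[set psi' | in_class psi psi']|%:R / #|hom c c|%:R : CC.
apply: char_poly_with_ext (char_poly_withZ (k := k c1 psi1 * k c2 psi2) _
  (char_poly_fix_homs_mul e_repr psi1 psi2)) => // d sigma _.
by rewrite !binomX_fix_homsE // mulrACA.
Qed.

Lemma weak_pushout_ob_le (c1 c2 c1' c2' d w : ob) :
  ob_le c1' c1 -> ob_le c2' c2 -> ob_ge_sum d c1 c2 ->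
  is_weak_pushout_ob c1' c2' w -> ob_le w d.
Proof.
case=> e1 [e2] d_ge [p [f1 [f2 [g1 [g2 [_ univ]]]]]].
have [w' [g1' [g2' wpo']]] := has_weak_pushouts (comp e1 f1) (comp e2 f2).
have [h] := d_ge _ _ _ _ _ _ wpo'.
have [[sq' pb'] _] := wpo'.
have pb : is_pullback f1 f2 (comp g1' e1) (comp g2' e2).
  apply: (is_pullbackI homs_mono) => [|q h1 h2 gh]; first by rewrite -!comp_assoc sq'.
  have gh' : comp g1' (comp e1 h1) = comp g2' (comp e2 h2) by rewrite !comp_assoc gh.
  have [u [u1 u2 _]] := pb' _ _ _ gh'.
  by exists u; split; [apply: (homs_mono (f := e1)) | apply: (homs_mono (f := e2))];
    rewrite comp_assoc.
have [u _] := univ _ _ _ pb.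
by constructor; exact: comp h u.
Qed.

Lemma char_poly_with_mul (ok okP okQ : ob -> Prop) (P Q : cfam C) :
  char_poly_with okP P -> char_poly_with okQ Q ->
  (forall c1 c2 w, okP c1 -> okQ c2 -> is_weak_pushout_ob c1 c2 w -> ok w) ->
  char_poly_with ok (cfam_mul P Q).
Proof.
move=> [n [a [cs [psi [_ a_ok PE]]]]] [m [b [cs' [psi' [_ b_ok QE]]]]] ok_wpo.
have term_cp i j : char_poly_with ok (fun d sigma =>
    a i * b j * ((binomX (psi i) sigma)%:R * (binomX (psi' j) sigma)%:R)).
  apply: char_poly_withZ (char_poly_binomX_mul (psi i) (psi' j)).
  by rewrite mulf_eq0 negb_or => /andP[ai0 bj0] w; apply: ok_wpo; [apply: a_ok | apply: b_ok].
apply: char_poly_with_ext (char_poly_with_sum (index_enum _) (fun i _ =>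
  char_poly_with_sum (index_enum _) (fun j _ => term_cp i j))) => d sigma _.
rewrite /cfam_mul PE // QE // mulr_suml; apply: eq_bigr => i _.
by rewrite mulr_sumr; apply: eq_bigr => j _; rewrite mulrACA.
Qed.

End Products.

Theorem mainTheorem8 (C : Cat) (HC : FI_type C) :
  (forall P Q : cfam C, is_char_poly P -> is_char_poly Q -> is_char_poly (cfam_mul P Q)) /\
  (forall (P Q : cfam C) (c1 c2 : ob C),
      deg_le P c1 -> deg_le Q c2 -> deg_le_sum (cfam_mul P Q) c1 c2).
Proof.
have [homs_mono [endos_iso [_ [finite_subobjects [has_pullbacks has_weak_pushouts]]]]] := HC.
have mul := char_poly_with_mul homs_mono endos_iso has_pullbacks has_weak_pushouts
  finite_subobjects.
split=> [P Q P_cp Q_cp | P Q c1 c2 P_c1 Q_c2 d d_ge]; first exact: mul P_cp Q_cp _.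
apply: mul P_c1 Q_c2 _ => c1' c2' w c1'_c1 c2'_c2.
exact: (weak_pushout_ob_le homs_mono has_weak_pushouts c1'_c1 c2'_c2 d_ge).
Qed.
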